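(* Consider a Markov decision process with state space $\mathcal{S}$ and action space $\mathcal{A}$ (subsets of Euclidean spaces), initial state distribution $\alpha$, stochastic policy $\pi(a\mid s)$, discount factor $\gamma\in(0,1)$, reward function $r(s,a)$, real transition density $T$ and learned transition density $T'$. Let $\rho_T^{\alpha,\pi},\rho_{T'}^{\alpha,\pi}$ be the normalized occupancy measures generated by $(\alpha,\pi,T)$ and $(\alpha,\pi,T')$, and let $p(s,a,s')=\rho_T^{\alpha,\pi}(s,a)T(s'\mid s,a)$, $p'(s,a,s')=\rho_{T'}^{\alpha,\pi}(s,a)T'(s'\mid s,a)$. If $r$ is $L_r$-Lipschitz and the training error of the WGAN is $\epsilon$, i.e. $W_1(p\,\|\,p')=\epsilon$, then $$|R(\pi,T)-R(\pi,T')|\le \frac{\epsilon L_r}{1-\gamma}.$$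
   Context: The normalized occupancy measure is $\rho_T^{\alpha,\pi}(s,a)=\sum_{t=0}^\infty(1-\gamma)\gamma^t\,\mathbb{P}(s_t=s,a_t=a\mid\alpha,\pi,T)$ for trajectories $s_0\sim\alpha$, $a_t\sim\pi(\cdot\mid s_t)$, $s_{t+1}\sim T(\cdot\mid s_t,a_t)$. The cumulative reward is $R(\pi,T)=R(\alpha,\pi,T)=\mathbb{E}\big[\sum_{t=0}^\infty\gamma^t r(s_t,a_t)\mid\alpha,\pi,T\big]=\mathbb{E}_{(s,a)\sim\rho_T^{\alpha,\pi}}[r(s,a)]/(1-\gamma)$. $W_1$ denotes the 1-Wasserstein distance, with Euclidean metrics on $\mathcal{S}\times\mathcal{A}$ and $\mathcal{S}\times\mathcal{A}\times\mathcal{S}$. *)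

From HB Require Import structures.
From mathcomp Require Import all_boot all_order all_algebra.
From mathcomp Require Import all_classical all_reals all_analysis.
Set Implicit Arguments. Unset Strict Implicit. Unset Printing Implicit Defensive.
Import Order.TTheory GRing.Theory Num.Theory.
Import numFieldNormedType.Exports.
Local Open Scope classical_set_scope.
Local Open Scope ring_scope.

Section MDP.
Context {R : realType}.

Definition sqdist {n : nat} (x y : n.-tuple R) : R :=
  \sum_(i < n) (tnth x i - tnth y i) ^+ 2.

Definition dist_SA {n m : nat} (x y : n.-tuple R * m.-tuple R) : R :=
  Num.sqrt (sqdist x.1 y.1 + sqdist x.2 y.2).

Definition dist_SAS {n m : nat}
    (x y : (n.-tuple R * m.-tuple R) * n.-tuple R) : R :=
  Num.sqrt (sqdist x.1.1 y.1.1 + sqdist x.1.2 y.1.2 + sqdist x.2 y.2).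

Context {n m : nat}.
Notation S := (n.-tuple R).
Notation A := (m.-tuple R).

(** Law of (s_t, a_t) for s_0 ~ alpha, a_t ~ pi(.|s_t), s_{t+1} ~ T(.|s_t,a_t):
    state_action_law t E = P((s_t, a_t) \in E | alpha, pi, T). *)
Fixpoint state_action_law (alpha : probability S R) (pi : R.-pker S ~> A)
    (T : R.-pker (S * A) ~> S) (t : nat) : set (S * A) -> \bar R :=
  match t with
  | 0 => fun E => (\int[alpha]_s pi s (xsection E s))%E
  | t'.+1 => fun E =>
      (\int[state_action_law alpha pi T t']_x
         \int[T x]_s' pi s' (xsection E s'))%E
  end.

Definition occupancy (alpha : probability S R) (pi : R.-pker S ~> A)
    (T : R.-pker (S * A) ~> S) (gamma : R) : set (S * A) -> \bar R :=
  fun E => (\sum_(0 <= t <oo)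
              ((1 - gamma) * gamma ^+ t)%:E * state_action_law alpha pi T t E)%E.

(** p(s,a,s') = rho(s,a) T(s'|s,a), as a measure on (S x A) x S. *)
Definition occ_transition (rho : set (S * A) -> \bar R)
    (T : R.-pker (S * A) ~> S) : set ((S * A) * S) -> \bar R :=
  fun E => (\int[rho]_x T x (xsection E x))%E.

Definition cum_reward (alpha : probability S R) (pi : R.-pker S ~> A)
    (T : R.-pker (S * A) ~> S) (gamma : R) (r : S * A -> R) : \bar R :=
  ((\int[occupancy alpha pi T gamma]_x (r x)%:E) * ((1 - gamma)^-1)%:E)%E.

Definition coupling (mu nu : set ((S * A) * S) -> \bar R)
    (c : probability (((S * A) * S) * ((S * A) * S))%type R) : Prop :=
  (forall E, measurable E -> c (E `*` setT) = mu E) /\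
  (forall E, measurable E -> c (setT `*` E) = nu E).

Definition W1_SAS (mu nu : set ((S * A) * S) -> \bar R) : \bar R :=
  ereal_inf [set (\int[c]_z (dist_SAS z.1 z.2)%:E)%E
            | c in [set c | coupling mu nu c]].

End MDP.

(* Let c be any coupling of p and p'.  Both occupancy measures are images of
   c, under (s,a,s',t,b,t') |-> (s,a) and |-> (t,b) respectively, so
   E_rho[r] - E_rho'[r] = E_c[r(s,a) - r(t,b)], whose absolute value is at most
   L_r * E_c[dist] by the Lipschitz bound.  Taking the infimum over couplings
   gives |E_rho[r] - E_rho'[r]| <= L_r * eps, and R = E_rho[r] / (1 - gamma).
   The occupancy, given as a set function, is indeed a measure: a weighted
   series of iterated kernel integrals. *)

From HB Require Import structures.
From mathcomp Require Import all_boot all_order all_algebra.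
From mathcomp Require Import all_classical all_reals all_analysis.
From mathcomp Require Import measurable_realfun.
Import Order.TTheory GRing.Theory Num.Theory.
Local Open Scope classical_set_scope.
Local Open Scope ring_scope.

Section mbind.
Local Open Scope ereal_scope.
Context {R : realType} d1 d2 (X : measurableType d1) (Y : measurableType d2).
Variables (mu : {measure set X -> \bar R}) (k : R.-ker X ~> Y).

Definition mbind (U : set Y) := \int[mu]_x k x U.

Let mbind0 : mbind set0 = 0.
Proof.
by rewrite /mbind (eq_integral (cst 0)) ?integral0// => x _; rewrite measure0.
Qed.

Let mbind_ge0 U : 0 <= mbind U. Proof. exact: integral_ge0. Qed.

Let mbind_sigma_additive : semi_sigma_additive mbind.
Proof.
move=> U mU tU mUU; rewrite [X in _ --> X](_ : _ =
  \int[mu]_x (\sum_(n <oo) k x (U n))); last first.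
  apply: eq_integral => x _.
  by apply/esym/cvg_lim => //; exact/measure_semi_sigma_additive.
apply/cvg_closeP; split.
  by apply: is_cvg_nneseries => n _ _; exact: integral_ge0.
rewrite closeE// integral_nneseries// => n.
exact: measurable_kernel.
Qed.

HB.instance Definition _ := isMeasure.Build _ _ R
  mbind mbind0 mbind_ge0 mbind_sigma_additive.

End mbind.
Arguments mbind {R d1 d2 X Y} mu k.

Section kbind.
Local Open Scope ereal_scope.
Context {R : realType} d1 d2 d3 (X : measurableType d1) (Y : measurableType d2)
  (Z : measurableType d3).
Variables (k : R.-ker X ~> Y) (l : R.-ker Y ~> Z).

Definition kbind : X -> {measure set Z -> \bar R} := fun x => mbind (k x) l.

Let measurable_kbind U : measurable U -> measurable_fun [set: X] (kbind ^~ U).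
Proof.
move=> mU; apply: measurable_fun_integral_kernel => //.
- exact: measurable_kernel.
- exact: measurable_kernel.
Qed.

HB.instance Definition _ := isKernel.Build _ _ _ _ _ kbind measurable_kbind.

End kbind.
Arguments kbind {R d1 d2 d3 X Y Z} k l.

Section kxsection.
Local Open Scope ereal_scope.
Context {R : realType} d1 d2 (X : measurableType d1) (Y : measurableType d2).
Variable k : R.-fker X ~> Y.

Definition kxsection_fun (x : X) (E : set (X * Y)) := k x (xsection E x).

Let kxsection0 x : kxsection_fun x set0 = 0.
Proof. by rewrite /kxsection_fun xsection0 measure0. Qed.

Let kxsection_ge0 x E : 0 <= kxsection_fun x E. Proof. exact: measure_ge0. Qed.

Let kxsection_sigma_additive x : semi_sigma_additive (kxsection_fun x).
Proof.
move=> F mF tF mUF; rewrite /kxsection_fun xsection_bigcup.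
apply: measure_semi_sigma_additive.
- by move=> n; exact: measurable_xsection.
- exact: trivIset_xsection.
- by rewrite -xsection_bigcup; exact: measurable_xsection.
Qed.

HB.instance Definition _ x := isMeasure.Build _ _ R
  (kxsection_fun x) (kxsection0 x) (kxsection_ge0 x)
  (kxsection_sigma_additive x).

Definition kxsection : X -> {measure set (X * Y) -> \bar R} := kxsection_fun.

Let measurable_kxsection E :
  measurable E -> measurable_fun [set: X] (kxsection ^~ E).
Proof.
by move=> mE; apply: measurable_fun_xsection_finite_kernel; rewrite inE.
Qed.

HB.instance Definition _ :=
  isKernel.Build _ _ _ _ _ kxsection measurable_kxsection.

End kxsection.
Arguments kxsection {R d1 d2 X Y} k.

Lemma integral_kernel_xsectionXT {R : realType} {d1 d2}
    {X : measurableType d1} {Y : measurableType d2}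
    (mu : {measure set X -> \bar R}) (k : R.-pker X ~> Y) (E : set X) :
  measurable E -> (\int[mu]_x k x (xsection (E `*` [set: Y]) x) = mu E)%E.
Proof.
move=> mE; rewrite -[E in RHS]setIT -integral_indic//.
apply: eq_integral => x _.
have [xE|xNE] := boolP (x \in E).
- by rewrite in_xsectionX// prob_kernel indicE xE.
- by rewrite notin_xsectionX// measure0 indicE (negbTE xNE).
Qed.

Section marginal.
Local Open Scope ereal_scope.
Context {R : realType} d1 d2 (W : measurableType d1) (X : measurableType d2).
Variables (c : {measure set W -> \bar R}) (mu : {measure set X -> \bar R}).
Variable phi : W -> X.
Hypotheses (mphi : measurable_fun [set: W] phi)
  (c_phi : forall E, measurable E -> c (phi @^-1` E) = mu E).

Let ge0_integral_marginal (f : X -> \bar R) :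
  (forall x, 0 <= f x) -> measurable_fun [set: X] f ->
  \int[c]_w f (phi w) = \int[mu]_x f x.
Proof.
move=> f0 mf.
rewrite [RHS](eq_measure_integral (pushforward c phi)); last first.
  by move=> E mE _; rewrite -c_phi.
by rewrite [RHS]ge0_integral_pushforward// preimage_setT.
Qed.

Lemma integral_marginal (f : X -> \bar R) : measurable_fun [set: X] f ->
  \int[c]_w f (phi w) = \int[mu]_x f x.
Proof.
move=> mf; rewrite integralE [RHS]integralE -[fun w => f (phi w)]/(f \o phi).
rewrite funepos_comp funeneg_comp !ge0_integral_marginal//.
- exact: measurable_funeneg.
- exact: measurable_funepos.
Qed.

Lemma integrable_marginal (f : X -> \bar R) :
  mu.-integrable [set: X] f -> c.-integrable [set: W] (f \o phi).
Proof.
move=> /integrableP[mf fi]; apply/integrableP; split.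
  exact: measurableT_comp.
by rewrite (@integral_marginal (fun x => `|f x|))//; exact: measurableT_comp.
Qed.

End marginal.
Arguments integral_marginal {R d1 d2 W X c mu phi}.
Arguments integrable_marginal {R d1 d2 W X c mu phi}.

Section coupling_gap.
Local Open Scope ereal_scope.
Context {R : realType} d1 d2 (W : measurableType d1) (X : measurableType d2).
Variables (c : {measure set W -> \bar R}) (mu1 mu2 : {measure set X -> \bar R}).
Variables (phi1 phi2 : W -> X).
Hypotheses (mphi1 : measurable_fun [set: W] phi1)
  (mphi2 : measurable_fun [set: W] phi2)
  (c_phi1 : forall E, measurable E -> c (phi1 @^-1` E) = mu1 E)
  (c_phi2 : forall E, measurable E -> c (phi2 @^-1` E) = mu2 E).

Lemma le_abse_integralB_coupling (f : X -> R) :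
  mu1.-integrable [set: X] (EFin \o f) ->
  mu2.-integrable [set: X] (EFin \o f) ->
  `|\int[mu1]_x (f x)%:E - \int[mu2]_x (f x)%:E|
    <= \int[c]_w (`|f (phi1 w) - f (phi2 w)|)%:E.
Proof.
move=> i1 i2.
have mf : measurable_fun [set: X] (EFin \o f) := measurable_int _ i1.
have mf1 : measurable_fun [set: W] (fun w => (f (phi1 w))%:E).
  exact: measurableT_comp mf mphi1.
have mf2 : measurable_fun [set: W] (fun w => (f (phi2 w))%:E).
  exact: measurableT_comp mf mphi2.
rewrite -(integral_marginal mphi1 c_phi1)// -(integral_marginal mphi2 c_phi2)//.
rewrite -integralB_EFin//; last 2 first.
- exact: (integrable_marginal mphi1 c_phi1 _ i1).
- exact: (integrable_marginal mphi2 c_phi2 _ i2).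
by apply: le_trans (le_abse_integral _ _ (emeasurable_funB mf1 mf2)) _.
Qed.

End coupling_gap.
Arguments le_abse_integralB_coupling {R d1 d2 W X c mu1 mu2 phi1 phi2}.

Lemma le_ereal_infZl {R : realType} (S : set (\bar R)) (L : R) (x : \bar R) :
  S !=set0 -> 0 <= L -> (forall y, S y -> x <= L%:E * y)%E ->
  (x <= L%:E * ereal_inf S)%E.
Proof.
move=> [y0 Sy0]; rewrite le_eqVlt => /orP[/eqP <-|L0] xS.
  by rewrite mul0e; have := xS _ Sy0; rewrite mul0e.
rewrite -ereal_inf_pZl//; apply: le_ereal_inf_tmp => _ [y Sy <-]; exact: xS.
Qed.

Section distances.
Context {R : realType} {n m : nat}.

Lemma sqdist_ge0 k (x y : k.-tuple R) : 0 <= sqdist x y.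
Proof. by apply: sumr_ge0 => i _; exact: sqr_ge0. Qed.

Lemma sqdistxx k (x : k.-tuple R) : sqdist x x = 0.
Proof. by apply: big1 => i _; rewrite subrr expr0n. Qed.

Lemma dist_SA_ge0 (x y : n.-tuple R * m.-tuple R) : 0 <= dist_SA x y.
Proof. exact: sqrtr_ge0. Qed.

Lemma dist_SA_le_SAS (x y : (n.-tuple R * m.-tuple R) * n.-tuple R) :
  dist_SA x.1 y.1 <= dist_SAS x y.
Proof. by rewrite ler_sqrt ?lerDl ?sqdist_ge0 // !addr_ge0 ?sqdist_ge0. Qed.

Lemma dist_SAS_sqr (x y : (n.-tuple R * m.-tuple R) * n.-tuple R) :
  dist_SAS x y ^+ 2 =
  dist_SA x.1 y.1 ^+ 2 + dist_SA (x.2, x.1.2) (y.2, x.1.2) ^+ 2.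
Proof.
by rewrite !sqr_sqrtr ?addr_ge0 ?sqdist_ge0 //= sqdistxx addr0.
Qed.

Lemma dist_SAS_eq0 : (forall x y : n.-tuple R * m.-tuple R, dist_SA x y = 0) ->
  forall x y : (n.-tuple R * m.-tuple R) * n.-tuple R, dist_SAS x y = 0.
Proof.
move=> dist0 x y; apply/eqP.
by rewrite -sqrf_eq0 dist_SAS_sqr !dist0 expr0n addr0.
Qed.

Lemma Lipschitz_lt0_dist_SA_eq0 {f : n.-tuple R * m.-tuple R -> R} {L : R} :
  L < 0 -> (forall x y, `|f x - f y| <= L * dist_SA x y) ->
  forall x y : n.-tuple R * m.-tuple R, dist_SA x y = 0.
Proof.
move=> L0 Lip x y; apply/eqP; rewrite eq_le dist_SA_ge0 andbT.
by rewrite -(nmulr_rge0 _ L0) (le_trans _ (Lip x y)).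
Qed.

Lemma measurable_sqdist k d (W : measurableType d) (f g : W -> k.-tuple R) :
  measurable_fun [set: W] f -> measurable_fun [set: W] g ->
  measurable_fun [set: W] (fun w => sqdist (f w) (g w)).
Proof.
move=> mf mg; apply: measurable_sum => i; apply: measurable_funX.
by apply: measurable_funB; exact: measurableT_comp (measurable_tnth i) _.
Qed.

Lemma measurable_dist_SAS :
  measurable_fun [set: ((n.-tuple R * m.-tuple R) * n.-tuple R) *
                       ((n.-tuple R * m.-tuple R) * n.-tuple R)]
    (fun z => dist_SAS z.1 z.2).
Proof.
apply: measurableT_comp (continuous_measurable_fun (@sqrt_continuous R)) _.
by apply: measurable_funD; first apply: measurable_funD;
  apply: measurable_sqdist; do ![apply: measurableT_comp => //].
Qed.

End distances.

Section occupancy_measure.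
Context {R : realType} {n m : nat}.
Notation S := (n.-tuple R).
Notation A := (m.-tuple R).
Variables (alpha : probability S R) (pi : R.-pker S ~> A)
  (T : R.-pker (S * A) ~> S).

Fixpoint state_action_measure (t : nat) : {measure set (S * A) -> \bar R} :=
  match t with
  | 0 => mbind alpha (kxsection pi)
  | t.+1 => mbind (state_action_measure t) (kbind T (kxsection pi))
  end.

Lemma state_action_lawE t :
  state_action_law alpha pi T t = state_action_measure t.
Proof. by elim: t => [//|t IH] /=; apply/funext => E; rewrite IH. Qed.

Variable gamma : R.
Hypothesis gamma01 : (0 <= gamma <= 1)%R.

Lemma occupancy_weight_ge0 t : (0 <= (1 - gamma) * gamma ^+ t)%R.
Proof.
by case/andP: gamma01 => g0 g1; rewrite mulr_ge0 ?subr_ge0 ?exprn_ge0.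
Qed.

Definition occupancy_measure : {measure set (S * A) -> \bar R} :=
  mseries (fun t => mscale (NngNum (occupancy_weight_ge0 t))
                           (state_action_measure t)) 0.

Lemma occupancyE : occupancy alpha pi T gamma = occupancy_measure.
Proof.
apply/funext => E; rewrite /occupancy /occupancy_measure /= /mseries.
congr (limn _); apply/funext => N; apply: eq_bigr => t _.
by rewrite state_action_lawE.
Qed.

End occupancy_measure.

Lemma W1_SAS_coupling {R : realType} {n m : nat}
    {mu nu : set ((n.-tuple R * m.-tuple R) * n.-tuple R) -> \bar R} {w : R} :
  W1_SAS mu nu = w%:E -> exists c, coupling mu nu c.
Proof.
move=> W1w; apply: contrapT => nocpl; move: W1w.
rewrite /W1_SAS (_ : [set c | coupling mu nu c] = set0).
  by rewrite image_set0 ereal_inf0.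
by apply/seteqP; split => // c cpl; apply: nocpl; exists c.
Qed.

Section reward_gap.
Local Open Scope ereal_scope.
Context {R : realType} {n m : nat}.
Notation S := (n.-tuple R).
Notation A := (m.-tuple R).
Variables (rho1 rho2 : {measure set (S * A) -> \bar R})
  (T1 T2 : R.-pker (S * A) ~> S) (r : S * A -> R).
Hypotheses (int1 : rho1.-integrable [set: S * A] (EFin \o r))
  (int2 : rho2.-integrable [set: S * A] (EFin \o r)).

Notation p1 := (occ_transition rho1 T1).
Notation p2 := (occ_transition rho2 T2).

Lemma coupling_marginals c : coupling p1 p2 c ->
  (forall E, measurable E -> c ((fun z => z.1.1) @^-1` E) = rho1 E) /\
  (forall E, measurable E -> c ((fun z => z.2.1) @^-1` E) = rho2 E).
Proof.
move=> [c1 c2]; split=> E mE.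
- rewrite (_ : _ @^-1` _ = (E `*` setT) `*` setT); last first.
    by apply/seteqP; split=> -[[? ?] ?] //= [[]].
  by rewrite c1; [exact: integral_kernel_xsectionXT|exact: measurableX].
- rewrite (_ : _ @^-1` _ = setT `*` (E `*` setT)); last first.
    by apply/seteqP; split=> -[? [? ?]] //= [_ []].
  by rewrite c2; [exact: integral_kernel_xsectionXT|exact: measurableX].
Qed.

Lemma reward_gap_le_coupling (L : R) c : (0 <= L)%R ->
  (forall x y, (`|r x - r y| <= L * dist_SA x y)%R) -> coupling p1 p2 c ->
  `|\int[rho1]_x (r x)%:E - \int[rho2]_x (r x)%:E|
    <= L%:E * \int[c]_z (dist_SAS z.1 z.2)%:E.
Proof.
move=> L0 Lip /coupling_marginals[c_fst c_snd].
have mr : measurable_fun [set: S * A] r.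
  by apply/measurable_EFinP; exact: measurable_int int1.
have mfst : measurable_fun [set: (S * A * S) * (S * A * S)] (fun z => z.1.1).
  exact: measurableT_comp.
have msnd : measurable_fun [set: (S * A * S) * (S * A * S)] (fun z => z.2.1).
  exact: measurableT_comp.
apply: le_trans
  (le_abse_integralB_coupling mfst msnd c_fst c_snd _ int1 int2) _.
have mdist := measurable_dist_SAS (R := R) (n := n) (m := m).
rewrite -ge0_integralZl//; last 2 first.
- exact/measurable_EFinP.
- by move=> z _; rewrite lee_fin sqrtr_ge0.
apply: ge0_le_integral => //.
- apply/measurable_EFinP; apply: measurableT_comp => //.
  apply: measurable_funB.
  + exact: measurableT_comp mr mfst.
  + exact: measurableT_comp mr msnd.
- exact/measurable_EFinP/measurable_funM.
- move=> z _; rewrite lee_fin (le_trans (Lip _ _))// ler_wpM2l//.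
  exact: dist_SA_le_SAS.
Qed.

Lemma reward_gap_le_W1 (L eps : R) :
  (forall x y, (`|r x - r y| <= L * dist_SA x y)%R) -> W1_SAS p1 p2 = eps%:E ->
  `|\int[rho1]_x (r x)%:E - \int[rho2]_x (r x)%:E| <= (eps * L)%:E.
Proof.
move=> Lip W1eps; have [c0 cpl0] := W1_SAS_coupling W1eps.
have [L0|Lneg] := leP 0%R L.
  rewrite mulrC EFinM -W1eps; apply: le_ereal_infZl => //.
    by exists (\int[c0]_z (dist_SAS z.1 z.2)%:E), c0.
  by move=> _ [c cpl <-]; exact: reward_gap_le_coupling.
(* A negative Lipschitz constant forces every distance to vanish, so eps <= 0
   and r takes the same value at the two ends of any coupled pair. *)
have dist0 := Lipschitz_lt0_dist_SA_eq0 Lneg Lip.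
have Lip0 x y : (`|r x - r y| <= 0 * dist_SA x y)%R.
  by rewrite dist0 mulr0 -(mulr0 L) -(dist0 x y).
have eps_le0 : (eps <= 0)%R.
  rewrite -lee_fin -W1eps; apply: le_trans (ereal_inf_lbound _) _.
    by exists c0.
  by rewrite (eq_integral (cst 0)) ?integral0// => z _; rewrite dist_SAS_eq0.
apply: le_trans (reward_gap_le_coupling _ _ (lexx 0%R) Lip0 cpl0) _.
by rewrite mul0e lee_fin mulr_le0// ltW.
Qed.

End reward_gap.
Arguments reward_gap_le_W1 {R n m rho1 rho2 T1 T2 r} int1 int2 {L eps}.

Theorem theorem1 (R : realType) (n m : nat)
    (alpha : probability (n.-tuple R) R)
    (pi : R.-pker (n.-tuple R) ~> (m.-tuple R))
    (T T' : R.-pker (n.-tuple R * m.-tuple R) ~> (n.-tuple R))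
    (gamma : R) (r : n.-tuple R * m.-tuple R -> R) (L_r eps : R) :
  0 < gamma < 1 ->
  (forall x y, `| r x - r y | <= L_r * dist_SA x y) ->
  (occupancy alpha pi T gamma).-integrable setT (fun x => (r x)%:E) ->
  (occupancy alpha pi T' gamma).-integrable setT (fun x => (r x)%:E) ->
  W1_SAS (occ_transition (occupancy alpha pi T gamma) T)
         (occ_transition (occupancy alpha pi T' gamma) T') = eps%:E ->
  (`| cum_reward alpha pi T gamma r - cum_reward alpha pi T' gamma r |
     <= (eps * L_r / (1 - gamma))%:E)%E.
Proof.
move=> /andP[g0 g1] Lip int1 int2 W1eps.
have g01 : 0 <= gamma <= 1 by rewrite !ltW.
rewrite /cum_reward !(occupancyE _ _ _ _ g01) in int1 int2 W1eps *.
have gap := reward_gap_le_W1 int1 int2 Lip W1eps.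
have inv_ge0 : 0 <= (1 - gamma)^-1 by rewrite invr_ge0 subr_ge0 ltW.
have fin2 := integrable_fin_num measurableT int2.
rewrite -muleBl ?fin_num_adde_defl ?fin_numN//.
by rewrite abseM abse_EFin ger0_norm// EFinM; exact: lee_wpmul2r.
Qed.
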